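(* For a ring $R$, the following are equivalent: (1) $R$ is a DT ring; (2) $R$ is a semi-tripotent ring; (3) for each $a\in R$ there exist $e\in R$ with $e^2=e$, $v\in R$ with $v^2=1$ and $ev=ve$, and $j\in J(R)$, such that $a=e+v+j$.
   Context: All rings are associative with identity. $J(R)$ is the Jacobson radical, $U(R)$ the group of units. $\Delta(R)=\{x\in R: x+u\in U(R)\text{ for all }u\in U(R)\}$. $\mathrm{Tr}(R)=\{x\in R: x^3=x\}$. A ring $R$ is a DT ring if every $r\in R$ can be written $r=e+d$ with $e\in\mathrm{Tr}(R)$ and $d\in\Delta(R)$. A ring $R$ is semi-tripotent if every $r\in R$ can be written $r=e+j$ with $e\in\mathrm{Tr}(R)$ and $j\in J(R)$. *)

From mathcomp Require Import all_boot all_order all_algebra.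
Set Implicit Arguments. Unset Strict Implicit. Unset Printing Implicit Defensive.
Import GRing.Theory.
Local Open Scope ring_scope.

(* Jacobson radical J(R), via the standard elementwise description:
   x \in J(R) iff 1 - r x is a unit for every r in R. *)
Definition jacobson (R : unitRingType) (x : R) : Prop :=
  forall r : R, (1 - r * x) \is a GRing.unit.

Definition Delta (R : unitRingType) (x : R) : Prop :=
  forall u : R, u \is a GRing.unit -> (x + u) \is a GRing.unit.

Definition tripotent (R : unitRingType) (e : R) : Prop := e ^+ 3 = e.

Definition DT_ring (R : unitRingType) : Prop :=
  forall r : R, exists e d : R, tripotent e /\ Delta d /\ r = e + d.

Definition semi_tripotent (R : unitRingType) : Prop :=
  forall r : R, exists e j : R, tripotent e /\ jacobson j /\ r = e + j.

(* Write x = y mod J for x - y in J(R).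
   (1) <-> (2): J(R) is always contained in Delta(R).  Conversely, in a DT
   ring, if d is in Delta(R) and s = t + d' with t tripotent and d' in
   Delta(R), then s d = t d + d' d is in Delta(R), so 1 - s d is a unit and d
   is in J(R).  Here t d is in Delta(R) because t = w t^2 with w = t + t^2 - 1
   an involution and t^2 idempotent, and h d is in Delta(R) for every
   idempotent h.
   (2) -> (3): a tripotent t is the sum of the idempotent 1 - t^2 and the
   commuting involution t + t^2 - 1.
   (3) -> (2): write every x as g + v mod J.  For x = 3 this gives 24 = 0,
   hence 6 = 0 mod J; in general it gives x^4 = x^2 and 4 (x^3 - x) = 0 mod J,
   and idempotents lift: if b^2 = b mod J, then b = 1 - g mod J.  A Peirce
   decomposition with respect to an idempotent lifting (n r)^2 shows that
   n^2 = 0 = 2 n mod J forces n in J(R); applied to 3 (x^3 - x) this gives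
   x^3 = x mod J.  Finally a = b1 - b2 mod J for orthogonal idempotents b1, b2
   modulo J; lifting them to orthogonal idempotents e, f gives the tripotent
   e - f = a mod J. *)

From mathcomp Require Import all_boot all_order all_algebra.
From mathcomp Require Import ring.

Set Implicit Arguments.
Unset Strict Implicit.
Unset Printing Implicit Defensive.
Import GRing.Theory.
Local Open Scope ring_scope.

Section CommutingEvaluation.
Variables (R : nzRingType) (x y : R).
Hypothesis cxy : GRing.comm x y.

Let commr_int_x : commr_rmorph (intr : int -> R) x := commr_int x.

Let commr_eval_fst : commr_rmorph (horner_morph commr_int_x) y.
Proof.
move=> p; elim/poly_ind: p => [|p c IH]; first by rewrite rmorph0; apply: commr0.
rewrite rmorphD rmorphM /= horner_morphX horner_morphC.
by apply: commrD; [apply: commrM => //; apply: commr_sym | apply: commr_int].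
Qed.

Lemma comm_eval_spec : exists2 f : {rmorphism {poly {poly int}} -> R},
  f 'X%:P = x & f 'X = y.
Proof.
exists (horner_morph commr_eval_fst); last exact: horner_morphX.
by rewrite /= horner_morphC; apply: horner_morphX.
Qed.

End CommutingEvaluation.

Lemma congr1_poly2 (R : nzRingType) (f : {rmorphism {poly {poly int}} -> R})
    (p q : {poly {poly int}}) :
  p = q -> f p = f q.
Proof. by move->. Qed.

(* [comm_ring cxy] proves a polynomial identity in two commuting elements
   [x], [y] of a possibly noncommutative ring ([cxy : GRing.comm x y]) by
   pulling it back along the evaluation morphism [int[X][Y] -> R] that sends
   ['X%:P] to [x] and ['X] to [y], where [ring] applies. *)
Ltac comm_ring cxy :=
  let f := fresh "f" in let fx := fresh "fx" in let fy := fresh "fy" in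
  have [f fx fy] := comm_eval_spec cxy;
  rewrite -?fx -?fy -?(rmorph_nat f) -?(rmorph1 f) -?(rmorph0 f);
  repeat (rewrite -(rmorphD f) || rewrite -(rmorphN f) || rewrite -(rmorphM f)
          || rewrite -(rmorphXn f));
  apply: congr1_poly2; ring.

Section Radical.
Variable R : unitRingType.
Implicit Types x y r s : R.

Lemma unit1B_mulC x y :
  (1 - x * y \is a GRing.unit) -> (1 - y * x \is a GRing.unit).
Proof.
move=> Uxy.
have xyx : x * (1 - y * x) = (1 - x * y) * x.
  by rewrite mulrBr mulrBl mulr1 mul1r mulrA.
have yxy : (1 - y * x) * y = y * (1 - x * y).
  by rewrite mulrBr mulrBl mulr1 mul1r mulrA.
apply/unitrP; exists (1 + y * (1 - x * y)^-1 * x); split.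
- by rewrite mulrDl mul1r -!mulrA xyx (mulrA _^-1) mulVr // mul1r subrK.
- by rewrite mulrDr mulr1 !mulrA yxy -(mulrA y) mulrV // mulr1 subrK.
Qed.

Lemma jacobson0 : jacobson (0 : R).
Proof. by move=> r; rewrite mulr0 subr0 unitr1. Qed.

Lemma jacobsonN x : jacobson x -> jacobson (- x).
Proof. by move=> Jx r; rewrite mulrN -mulNr. Qed.

Lemma jacobsonMl r x : jacobson x -> jacobson (r * x).
Proof. by move=> Jx s; rewrite mulrA. Qed.

Lemma jacobsonMr x r : jacobson x -> jacobson (x * r).
Proof. by move=> Jx s; rewrite mulrA; apply: unit1B_mulC; rewrite mulrA. Qed.

Lemma jacobsonD x y : jacobson x -> jacobson y -> jacobson (x + y).
Proof.
move=> Jx Jy s; have Ux := Jx s.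
have -> : 1 - s * (x + y) = (1 - s * x) * (1 - ((1 - s * x)^-1 * s) * y).
  by rewrite mulrBr mulr1 !mulrA mulrV // mul1r mulrDr opprD addrA.
by rewrite unitrMr.
Qed.

Lemma jacobsonB x y : jacobson x -> jacobson y -> jacobson (x - y).
Proof. by move=> Jx Jy; apply: jacobsonD (jacobsonN Jy). Qed.

Lemma jacobson_unit1B x : jacobson x -> (1 - x \is a GRing.unit).
Proof. by move/(_ 1); rewrite mul1r. Qed.

Lemma jacobson_sqr_unit1B x : jacobson (x * x) -> (1 - x \is a GRing.unit).
Proof.
move=> /jacobson_unit1B.
have -> : 1 - x * x = (1 - x) * (1 + x) by comm_ring (commr_refl x).
by rewrite unitrM_comm => [/andP[]//|]; rewrite /GRing.comm; comm_ring (commr_refl x).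
Qed.

Lemma jacobson_of_sqr_central x :
  (forall r, GRing.comm r x) -> jacobson (x * x) -> jacobson x.
Proof.
move=> cx Jxx r; apply: jacobson_sqr_unit1B.
by rewrite mulrA -(mulrA r) -cx !mulrA -mulrA; apply: jacobsonMl.
Qed.

Definition jcong x y := jacobson (x - y).

Lemma jcong_refl x : jcong x x.
Proof. by rewrite /jcong subrr; apply: jacobson0. Qed.

Lemma jcong_sym x y : jcong x y -> jcong y x.
Proof. by move=> Jxy; rewrite /jcong -opprB; apply: jacobsonN. Qed.

Lemma jcong_trans x y z : jcong x y -> jcong y z -> jcong x z.
Proof. by rewrite /jcong => Jxy /(jacobsonD Jxy); rewrite addrA subrK. Qed.

Lemma jcong_jacobson x y : jcong x y -> jacobson y -> jacobson x.
Proof. by rewrite /jcong => Jxy /(jacobsonD Jxy); rewrite subrK. Qed.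

Lemma jcongB x x' y y' : jcong x x' -> jcong y y' -> jcong (x - y) (x' - y').
Proof.
rewrite /jcong => Jx Jy.
rewrite (_ : x - y - _ = (x - x') - (y - y')); first exact: jacobsonB.
by rewrite !opprB addrACA [RHS]addrACA [- y + _]addrC.
Qed.

Lemma jcongM x x' y y' : jcong x x' -> jcong y y' -> jcong (x * y) (x' * y').
Proof.
rewrite /jcong => Jx Jy.
have -> : x * y - x' * y' = (x - x') * y + x' * (y - y').
  by rewrite mulrBl mulrBr addrA subrK.
by apply: jacobsonD; [apply: jacobsonMr | apply: jacobsonMl].
Qed.

Lemma jcongX n x y : jcong x y -> jcong (x ^+ n) (y ^+ n).
Proof.
move=> Jxy; elim: n => [|n IHn]; first exact: jcong_refl.
by rewrite !exprS; apply: jcongM.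
Qed.

End Radical.

Section Delta.
Variable R : unitRingType.
Implicit Types x y z u d h : R.

Lemma jacobson_Delta x : jacobson x -> Delta x.
Proof.
move=> Jx u Uu.
have -> : x + u = u * (1 - (- u^-1) * x).
  by rewrite mulNr opprK mulrDr mulr1 mulVKr // addrC.
by rewrite unitrMr.
Qed.

Lemma DeltaD x y : Delta x -> Delta y -> Delta (x + y).
Proof. by move=> Dx Dy u Uu; rewrite -addrA; apply/Dx/Dy. Qed.

Lemma DeltaN x : Delta x -> Delta (- x).
Proof.
move=> Dx u Uu; rewrite -[u]opprK -opprD unitrN.
by apply: Dx; rewrite unitrN.
Qed.

Lemma Delta_unit1B x : Delta x -> (1 - x \is a GRing.unit).
Proof. by move/DeltaN/(_ 1 (unitr1 R)); rewrite addrC. Qed.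

Lemma DeltaMl_unit u x : u \is a GRing.unit -> Delta x -> Delta (u * x).
Proof.
move=> Uu Dx w Uw.
have -> : u * x + w = u * (x + u^-1 * w) by rewrite mulrDr mulVKr.
by rewrite unitrMr //; apply: Dx; rewrite unitrMl // unitrV.
Qed.

Lemma DeltaM x y : Delta x -> Delta y -> Delta (x * y).
Proof.
move=> Dx Dy u Uu.
have Ux1 : x + 1 \is a GRing.unit by apply: Dx; apply: unitr1.
have Uuy : u - y \is a GRing.unit by rewrite addrC; apply: DeltaN.
have -> : x * y + u = (u - y) * ((u - y)^-1 * (x + 1) * y + 1).
  by rewrite mulrDr mulr1 !mulrA mulrV // mul1r mulrDl mul1r -addrA (addrC y) subrK.
rewrite unitrMr //; apply: DeltaMl_unit Dy _ (unitr1 R).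
by rewrite unitrMl // unitrV.
Qed.

Lemma unit_idem_corner h X : h * h = h -> X \is a GRing.unit -> h * X = X * h ->
  1 - h + h * X \is a GRing.unit.
Proof.
move=> hh UX hX; have hXV : h * X^-1 = X^-1 * h by apply: commrV.
have hk : h * (1 - h) = 0 by rewrite mulrBr mulr1 hh subrr.
have kh : (1 - h) * h = 0 by rewrite mulrBl mul1r hh subrr.
have kk : (1 - h) * (1 - h) = 1 - h by rewrite mulrBr mulr1 kh subr0.
have kh1 : 1 - h + h = 1 by rewrite subrK.
move: (1 - h) hk kh kk kh1 => k hk kh kk kh1.
apply/unitrP; exists (k + h * X^-1); split.
- rewrite mulrDl !mulrDr kk mulrA kh mul0r addr0 hXV -mulrA hk mulr0 add0r.
  by rewrite mulrA -(mulrA _ h h) hh -mulrA hX mulKr.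
- rewrite mulrDl !mulrDr kk mulrA kh mul0r addr0 hX -mulrA hk mulr0 add0r.
  by rewrite mulrA -(mulrA _ h h) hh -mulrA hXV mulVKr.
Qed.

Lemma unit1D_sqr0 z : z * z = 0 -> 1 + z \is a GRing.unit.
Proof.
move=> zz; apply/unitrP; exists (1 - z).
have -> : (1 - z) * (1 + z) = 1 - z * z by comm_ring (commr_refl z).
have -> : (1 + z) * (1 - z) = 1 - z * z by comm_ring (commr_refl z).
by rewrite zz subr0.
Qed.

Lemma unit1B_idemM h d : h * h = h -> Delta d -> 1 - h * d \is a GRing.unit.
Proof.
move=> hh Dd.
have hk : h * (1 - h) = 0 by rewrite mulrBr mulr1 hh subrr.
have kh : (1 - h) * h = 0 by rewrite mulrBl mul1r hh subrr.
have kh1 : 1 - h + h = 1 by rewrite subrK.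
move: (1 - h) hk kh kh1 => k hk kh kh1.
have hd : h * d = h * d * k + h * d * h by rewrite -mulrDr kh1 mulr1.
have dh : d * h = k * d * h + h * d * h by rewrite -!mulrDl kh1 mul1r.
have UW : (1 + k * d * h) * (1 + h * d * k) \is a GRing.unit.
  rewrite unitrMl; apply: unit1D_sqr0.
  - by rewrite !mulrA -(mulrA (k * d) h k) hk mulr0 !mul0r.
  - by rewrite !mulrA -(mulrA (h * d) k h) kh mulr0 !mul0r.
have UX : (1 + k * d * h) * (1 + h * d * k) - d \is a GRing.unit.
  by rewrite addrC; apply: DeltaN Dd _ UW.
have hX : h * ((1 + k * d * h) * (1 + h * d * k) - d) = h - h * d * h.
  rewrite mulrBr mulrA [h * (1 + _)]mulrDr mulr1 !mulrA hk !mul0r addr0.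
  rewrite mulrDr mulr1 !mulrA hh.
  by rewrite {2}hd opprD addrA addrK.
have Xh : ((1 + k * d * h) * (1 + h * d * k) - d) * h = h - h * d * h.
  rewrite mulrBl -(mulrA (1 + k * d * h)) [(1 + _) * h]mulrDl mul1r -(mulrA _ k h) kh.
  rewrite mulr0 addr0 mulrDl mul1r -(mulrA _ h h) hh.
  by rewrite dh opprD addrA addrK.
have := unit_idem_corner hh UX; rewrite hX Xh addrA subrK => /(_ erefl).
by rewrite -mulrA => /unit1B_mulC; rewrite -mulrA hh => /unit1B_mulC.
Qed.

Lemma DeltaMl_idem h d : h * h = h -> Delta d -> Delta (h * d).
Proof.
move=> hh Dd u Uu.
have -> : h * d + u = u * (1 - (u^-1 * h * u) * (- (u^-1 * d))).
  by rewrite mulrN opprK -!mulrA mulVKr // mulrDr mulr1 mulVKr // addrC.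
rewrite unitrMr //; apply: unit1B_idemM.
- by rewrite -!mulrA mulVKr // !mulrA -(mulrA _ h h) hh.
- by apply/DeltaN/DeltaMl_unit => //; rewrite unitrV.
Qed.

End Delta.

Section Tripotent.
Variable R : unitRingType.
Implicit Types d e f t : R.

Lemma tripotentE t : tripotent t ->
  [/\ t ^+ 2 * t ^+ 2 = t ^+ 2, (t + t ^+ 2 - 1) * (t + t ^+ 2 - 1) = 1
     & t = (t + t ^+ 2 - 1) * t ^+ 2].
Proof.
rewrite /tripotent => t3; have ct := commr_refl t.
have -> : t ^+ 2 * t ^+ 2 = t ^+ 2 + (t ^+ 3 - t) * t by comm_ring ct.
have -> : (t + t ^+ 2 - 1) * (t + t ^+ 2 - 1) = 1 + (t ^+ 3 - t) * (t + 2%:R).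
  by comm_ring ct.
have -> : (t + t ^+ 2 - 1) * t ^+ 2 = t + (t ^+ 3 - t) * (t + 1) by comm_ring ct.
by rewrite t3 subrr !mul0r !addr0.
Qed.

Lemma tripotentMl_Delta t d : tripotent t -> Delta d -> Delta (t * d).
Proof.
move=> /tripotentE[tt vv ->] Dd; rewrite -mulrA.
apply: DeltaMl_unit; first by apply/unitrP; exists (t + t ^+ 2 - 1).
exact: DeltaMl_idem.
Qed.

Lemma DT_Delta_jacobson d : DT_ring R -> Delta d -> jacobson d.
Proof.
move=> DT Dd s; have [t [d' [tt [Dd' ->]]]] := DT s.
by rewrite mulrDl; apply/Delta_unit1B/DeltaD; [apply: tripotentMl_Delta | apply: DeltaM].
Qed.

Lemma DT_ring_semi_tripotent : DT_ring R <-> semi_tripotent R.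
Proof.
split=> decomp r; have [t [d [tt [Dd ->]]]] := decomp r; exists t, d; do !split=> //.
- exact: DT_Delta_jacobson.
- exact: jacobson_Delta.
Qed.

Lemma semi_tripotent_decomp : semi_tripotent R ->
  forall a : R, exists e v j : R,
    e * e = e /\ v * v = 1 /\ e * v = v * e /\ jacobson j /\ a = e + v + j.
Proof.
move=> ST a; have [t [j [tt [Jj ->]]]] := ST a.
have [t2t2 vv _] := tripotentE tt.
exists (1 - t ^+ 2), (t + t ^+ 2 - 1), j; do !split=> //.
- by rewrite mulrBr mulr1 mulrBl mul1r t2t2 subrr subr0.
- by comm_ring (commr_refl t).
- by congr (_ + _); comm_ring (commr_refl t).
Qed.

Lemma tripotentB_orthogonal e f :
  e * e = e -> f * f = f -> e * f = 0 -> f * e = 0 -> tripotent (e - f).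
Proof.
move=> ee ff ef fe; have cef : GRing.comm e f by rewrite /GRing.comm ef fe.
rewrite /tripotent.
have -> : (e - f) ^+ 3 = (e - f) + (e * e - e) * (e + 1) - (f * f - f) * (f + 1)
                         - 3%:R * (e * f) * (e - f) by comm_ring cef.
by rewrite ee ff ef !subrr !mul0r mulr0 !mul0r !subr0 addr0.
Qed.

Lemma tripotent_lift_idempotentsB e f :
    e * e = e -> f * f = f -> jacobson (e * f) -> jacobson (f * e) ->
  exists2 t, tripotent t & jcong t (e - f).
Proof.
move=> ee ff Jef Jfe; have Uu := jacobson_unit1B Jfe.
pose f' := (1 - f * e)^-1 * f * (1 - f * e).
have f'f' : f' * f' = f' by rewrite /f' -!mulrA mulVKr // (mulrA f f) ff.
have f'e : f' * e = 0.
  by rewrite /f' -!mulrA mulrBl mul1r -mulrA ee mulrBr (mulrA f f) ff subrr !mulr0.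
have f'f : jcong f' f.
  rewrite /jcong /f' -[X in _ - X](mulKr Uu f) -mulrA -mulrBr.
  have -> : f * (1 - f * e) - (1 - f * e) * f = f * e * (f - 1).
    rewrite mulrBr mulr1 mulrBl mul1r (mulrA f f) ff mulrBr mulr1.
    by rewrite opprB addrC addrA subrK.
  exact/jacobsonMl/jacobsonMr.
pose e' := e * (1 - f').
have e'e' : e' * e' = e'.
  by rewrite /e' -mulrA (mulrA (1 - f')) mulrBl mul1r f'e subr0 mulrA ee.
have e'f' : e' * f' = 0 by rewrite /e' -mulrA mulrBl mul1r f'f' subrr mulr0.
have f'e' : f' * e' = 0 by rewrite /e' mulrA f'e mul0r.
have e'e : jcong e' e.
  rewrite /jcong /e' mulrBr mulr1 addrAC subrr add0r; apply: jacobsonN.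
  exact: jcong_jacobson (jcongM (jcong_refl e) f'f) Jef.
by exists (e' - f'); [apply: tripotentB_orthogonal | apply: jcongB].
Qed.

End Tripotent.

Lemma peirce_pow4_sqr (R : nzRingType) (e B S : R) :
    e * e = e -> e * B = B -> B * e = 0 -> e * S = 0 -> S * e = S ->
  let X := e + B + S in
  e * (X ^+ 4 - X ^+ 2) * e = B * S + B * S + (B * S) ^+ 2.
Proof.
move=> ee eB Be eS Se X.
have BB : B * B = 0 by rewrite -{2}eB mulrA Be mul0r.
have SS : S * S = 0 by rewrite -{1}Se -mulrA eS mulr0.
have eX : e * X = e + B by rewrite /X !mulrDr ee eB eS addr0.
have Xe : X * e = e + S by rewrite /X !mulrDl ee Be Se addr0.
have eX2 : e * X ^+ 2 = e + B + B * S.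
  by rewrite expr2 mulrA eX mulrDl eX /X !mulrDr Be BB !add0r.
have X2e : X ^+ 2 * e = e + S + B * S.
  by rewrite expr2 -mulrA Xe mulrDr Xe /X !mulrDl eS SS add0r addr0.
have eX2e : e * X ^+ 2 * e = e + B * S.
  by rewrite eX2 !mulrDl ee Be -mulrA Se addr0.
have eX4e : e * X ^+ 4 * e = e + B * S + (B * S + B * S + (B * S) ^+ 2).
  rewrite -[4%N]/(2 + 2)%N exprD mulrA -mulrA eX2 X2e.
  rewrite -[e + S + _]addrA mulrDr -eX2 eX2e eX2; congr (_ + _).
  rewrite mulrDr !mulrDl eS -(mulrA B S S) SS mulr0 (mulrA e B) eB (mulrA B B) BB.
  by rewrite mul0r add0r !addr0 addrA expr2.
by rewrite mulrBr mulrBl eX4e eX2e addrAC subrr add0r.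
Qed.

Section IdempotentPlusInvolution.
Variable R : unitRingType.
Implicit Types a b x n r e : R.
Hypothesis decomp : forall a : R, exists e v j : R,
  e * e = e /\ v * v = 1 /\ e * v = v * e /\ jacobson j /\ a = e + v + j.

Lemma jcong_decomp x : exists g v,
  [/\ g * g = g, v * v = 1, GRing.comm g v & jcong x (g + v)].
Proof.
have [g [v [j [gg [vv [gv [Jj ->]]]]]]] := decomp x.
by exists g, v; split=> //; rewrite /jcong addrAC subrr add0r.
Qed.

Lemma jacobson6 : jacobson (6%:R : R).
Proof.
have [g [v [gg vv _ J3]]] := jcong_decomp 3%:R.
have J3v : jcong (3%:R - g) v by rewrite /jcong -addrA -opprD.
have := jcongX 2 J3v; rewrite [v ^+ 2]expr2 vv => Jv.
have J24 : jacobson (24%:R : R).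
  have -> : 24%:R = (5%:R * g + 3%:R) * ((3%:R - g) ^+ 2 - 1)
                   + (22%:R - 5%:R * g) * (g * g - g) :> R.
    by comm_ring (commr_refl g).
  by rewrite gg subrr mulr0 addr0; apply: jacobsonMl.
have J12 : jacobson (12%:R : R).
  apply: jacobson_of_sqr_central => [r|]; first exact: commr_nat.
  have -> : 12%:R * 12%:R = 6%:R * 24%:R :> R by rewrite -!natrM.
  exact: jacobsonMl.
apply: jacobson_of_sqr_central => [r|]; first exact: commr_nat.
have -> : 6%:R * 6%:R = 3%:R * 12%:R :> R by rewrite -!natrM.
exact: jacobsonMl.
Qed.

Lemma jacobson_pow4_sqr x : jacobson (x ^+ 4 - x ^+ 2).
Proof.
have [g [v [gg vv gv xgv]]] := jcong_decomp x.
apply: jcong_jacobson (jcongB (jcongX 4 xgv) (jcongX 2 xgv)) _.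
have -> : (g + v) ^+ 4 - (g + v) ^+ 2 = 6%:R * (g + g * v)
    + (g * g - g) * (4%:R * v + 6%:R * v ^+ 2 + g + 4%:R * g * v + g ^+ 2)
    + (v * v - 1) * (v ^+ 2 + 6%:R * g + 4%:R * g * v).
  by comm_ring gv.
by rewrite gg vv !subrr !mul0r !addr0; apply: jacobsonMr jacobson6.
Qed.

Lemma jacobson4_cube x : jacobson (4%:R * (x ^+ 3 - x)).
Proof.
have [g [v [gg vv gv xgv]]] := jcong_decomp x.
apply: jcong_jacobson (jcongM (jcong_refl _) (jcongB (jcongX 3 xgv) xgv)) _.
have -> : 4%:R * ((g + v) ^+ 3 - (g + v)) = 6%:R * (2%:R * g + 2%:R * g * v)
    + (g * g - g) * (4%:R + 12%:R * v + 4%:R * g)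
    + (v * v - 1) * (4%:R * v + 12%:R * g).
  by comm_ring gv.
by rewrite gg vv !subrr !mul0r !addr0; apply: jacobsonMr jacobson6.
Qed.

Lemma idempotent_lift b : jacobson (b ^+ 2 - b) -> exists2 e, e * e = e & jcong e b.
Proof.
move=> Jb; have [g [v [gg vv gv bgv]]] := jcong_decomp b.
exists (1 - g); first by rewrite mulrBr mulr1 mulrBl mul1r gg subrr subr0.
apply: jcong_trans (jcong_sym bgv); rewrite /jcong.
have -> : 1 - g - (g + v) = (1 - 2%:R * g) * ((g + v) ^+ 2 - (g + v))
    + (g * g - g) * (4%:R * v + 2%:R * g - 1) + (v * v - 1) * (2%:R * g - 1).
  by comm_ring gv.
rewrite gg vv !subrr !mul0r !addr0; apply: jacobsonMl.
exact: jcong_jacobson (jcongB (jcongX 2 (jcong_sym bgv)) (jcong_sym bgv)) Jb.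
Qed.

Lemma jacobson_corner_sqr e n r : e * e = e -> jacobson (n + n) ->
  jacobson ((e * n * (1 - e) * ((1 - e) * r * e)) ^+ 2).
Proof.
move=> ee Jn2.
have eB : e * (e * n * (1 - e)) = e * n * (1 - e) by rewrite !mulrA ee.
have Be : e * n * (1 - e) * e = 0 by rewrite -mulrA mulrBl mul1r ee subrr mulr0.
have eS : e * ((1 - e) * r * e) = 0 by rewrite !mulrA mulrBr mulr1 ee subrr !mul0r.
have Se : (1 - e) * r * e * e = (1 - e) * r * e by rewrite -mulrA ee.
have := jacobsonMr e (jacobsonMl e
  (jacobson_pow4_sqr (e + e * n * (1 - e) + (1 - e) * r * e))).
rewrite (peirce_pow4_sqr ee eB Be eS Se) => Jp.
have Jp2 : jacobson (e * n * (1 - e) * ((1 - e) * r * e) *+ 2).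
  by rewrite -mulrnAl -mulrnAl -mulrnAr; apply/jacobsonMr/jacobsonMr/jacobsonMl.
by have := jacobsonB Jp Jp2; rewrite mulr2n addrAC subrr add0r.
Qed.

Lemma jacobson_mul_sqr n r : jacobson (n * n) -> jacobson (n + n) ->
  jacobson ((n * r) ^+ 2).
Proof.
move=> Jnn Jn2.
have [e ee eN] : exists2 e, e * e = e & jcong e ((n * r) ^+ 2).
  by apply: idempotent_lift; rewrite -exprM; apply: jacobson_pow4_sqr.
have Jene : jacobson (e * n * e).
  apply: jcong_jacobson (jcongM (jcongM eN (jcong_refl n)) eN) _.
  have -> : (n * r) ^+ 2 * n * (n * r) ^+ 2 = n * r * n * r * (n * n) * (r * n * r).
    by rewrite !expr2 !mulrA.
  exact/jacobsonMr/jacobsonMl.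
have pN : jcong (e * n * (1 - e) * ((1 - e) * r * e)) ((n * r) ^+ 5).
  apply: (@jcong_trans _ _ (e * (n * r) * e)).
    have -> : e * n * (1 - e) * ((1 - e) * r * e) = e * (n * r) * e - e * n * e * r * e.
      have kk : (1 - e) * (1 - e) = 1 - e by rewrite mulrBr mulr1 mulrBl mul1r ee subrr subr0.
      by rewrite !mulrA -(mulrA (e * n) (1 - e)) kk mulrBr mulr1 !mulrBl.
    by rewrite /jcong addrAC subrr add0r; apply/jacobsonN/jacobsonMr/jacobsonMr.
  have -> : (n * r) ^+ 5 = (n * r) ^+ 2 * (n * r) * (n * r) ^+ 2 by rewrite -exprSr -exprD.
  exact: jcongM (jcongM eN (jcong_refl _)) eN.
have N10 : jcong ((n * r) ^+ 10) ((n * r) ^+ 2).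
  rewrite /jcong.
  have -> : (n * r) ^+ 10 - (n * r) ^+ 2 = ((n * r) ^+ 4 - (n * r) ^+ 2) *
     ((n * r) ^+ 6 + (n * r) ^+ 4 + (n * r) ^+ 2 + 1) by comm_ring (commr_refl (n * r)).
  exact/jacobsonMr/jacobson_pow4_sqr.
have := jcongX 2 pN; rewrite -exprM => pN2.
apply: jcong_jacobson (jacobson_corner_sqr r ee Jn2).
exact: jcong_trans (jcong_sym N10) (jcong_sym pN2).
Qed.

Lemma jacobson_of_nil2 n : jacobson (n * n) -> jacobson (n + n) -> jacobson n.
Proof.
move=> Jnn Jn2 r; apply/unit1B_mulC/jacobson_sqr_unit1B.
by rewrite -expr2; apply: jacobson_mul_sqr.
Qed.

Lemma jacobson_cube x : jacobson (x ^+ 3 - x).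
Proof.
have J3 : jacobson (3%:R * (x ^+ 3 - x)).
  apply: jacobson_of_nil2.
    have -> : 3%:R * (x ^+ 3 - x) * (3%:R * (x ^+ 3 - x)) =
              (x ^+ 4 - x ^+ 2) * (9%:R * x ^+ 2 - 9%:R) by comm_ring (commr_refl x).
    exact/jacobsonMr/jacobson_pow4_sqr.
  by rewrite -mulrDl -natrD; apply/jacobsonMr/jacobson6.
have -> : x ^+ 3 - x = 4%:R * (x ^+ 3 - x) - 3%:R * (x ^+ 3 - x).
  by rewrite -mulrBl -natrB // mul1r.
exact: jacobsonB (jacobson4_cube x) J3.
Qed.

Lemma jacobson3_sqr x : jacobson (3%:R * (x ^+ 2 - x)).
Proof.
have -> : 3%:R * (x ^+ 2 - x) = ((x + 1) ^+ 3 - (x + 1)) - (x ^+ 3 - x) - 6%:R * x.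
  by comm_ring (commr_refl x).
by apply/jacobsonB/jacobsonMr/jacobson6; apply/jacobsonB; apply: jacobson_cube.
Qed.

Lemma jcong_sub_idempotents a : exists b1 b2 : R,
  [/\ jacobson (b1 ^+ 2 - b1), jacobson (b2 ^+ 2 - b2), jacobson (b1 * b2),
       jacobson (b2 * b1) & jcong a (b1 - b2)].
Proof.
have ca := commr_refl a; have Ja := jacobson_cube a; have J6 := jacobson6.
(* Modulo J, where 6 = 0 and a^3 = a, these are orthogonal idempotents with
   b1 - b2 = -5a = a. *)
pose b1 := - a - 4%:R * a ^+ 2; pose b2 := 4%:R * a - 4%:R * a ^+ 2.
have b21 : b2 * b1 = b1 * b2 by rewrite /b1 /b2; comm_ring ca.
have Jb12 : jacobson (b1 * b2).
  have -> : b1 * b2 = (a ^+ 3 - a) * (16%:R * a - 12%:R) + 6%:R * (2%:R * a ^+ 2 - 2%:R * a).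
    by rewrite /b1 /b2; comm_ring ca.
  by apply: jacobsonD; apply: jacobsonMr.
exists b1, b2; split; rewrite ?b21 //.
- have -> : b1 ^+ 2 - b1 = (a ^+ 3 - a) * (16%:R * a + 8%:R)
      + 6%:R * (3%:R * a ^+ 2 + 2%:R * a) + 3%:R * (a ^+ 2 - a).
    by rewrite /b1; comm_ring ca.
  by apply: jacobsonD; [apply: jacobsonD; apply: jacobsonMr | apply: jacobson3_sqr].
- have -> : b2 ^+ 2 - b2 = (a ^+ 3 - a) * (16%:R * a - 32%:R)
      + 6%:R * (6%:R * a ^+ 2 - 6%:R * a).
    by rewrite /b2; comm_ring ca.
  by apply: jacobsonD; apply: jacobsonMr.
- rewrite /jcong; have -> : a - (b1 - b2) = 6%:R * a by rewrite /b1 /b2; comm_ring ca.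
  exact: jacobsonMr.
Qed.

Lemma semi_tripotent_of_decomp : semi_tripotent R.
Proof.
move=> a; have [b1 [b2 [Jb1 Jb2 Jb12 Jb21 ab]]] := jcong_sub_idempotents a.
have [e ee eb1] := idempotent_lift Jb1; have [f ff fb2] := idempotent_lift Jb2.
have [t tt te] := tripotent_lift_idempotentsB ee ff
  (jcong_jacobson (jcongM eb1 fb2) Jb12) (jcong_jacobson (jcongM fb2 eb1) Jb21).
exists t, (a - t); do !split => //; last by rewrite addrC subrK.
exact: jcong_trans ab (jcong_sym (jcong_trans te (jcongB eb1 fb2))).
Qed.

End IdempotentPlusInvolution.

Theorem theorem4p13 (R : unitRingType) :
  (DT_ring R <-> semi_tripotent R) /\
  (semi_tripotent R <->
     (forall a : R, exists e v j : R,
        e * e = e /\ v * v = 1 /\ e * v = v * e /\ jacobson j /\ a = e + v + j)).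
Proof.
split; first exact: DT_ring_semi_tripotent.
by split; [apply: semi_tripotent_decomp | apply: semi_tripotent_of_decomp].
Qed.
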